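(* Let $\mathbb{B}$ be a separable Banach space with dual $\mathbb{B}^*$, $S_1^*(0)$ the unit sphere of $\mathbb{B}^*$, and $\mathcal K_{\mathbb B}$ the space of nonempty compact subsets of $\mathbb{B}$ with the Hausdorff distance. Let $(B_n)_{n\ge0}$ be a sequence of random convex elements of $\mathcal K_{\mathbb B}$ which is almost surely relatively compact in $\mathcal K_{\mathbb B}$. Suppose there is a deterministic function $\varphi:S_1^*(0)\to\mathbb{R}$ such that for every $\theta\in S_1^*(0)$, $\mathcal M_{B_n}(\theta)\to\varphi(\theta)$ almost surely as $n\to\infty$. Then $\varphi$ is the support function of some set $A\in\mathcal K_{\mathbb B}$ and $B_n\to A$ almost surely in $\mathcal K_{\mathbb B}$.
   Context: For $A\in\mathcal K_{\mathbb B}$, the support function is $\mathcal M_A(\theta)=\sup_{x\in A}\langle x,\theta\rangle$, $\theta\in S_1^*(0)$. Hausdorff distance: $\rho_{\mathbb B}(A,B)=\max\{\inf\{\epsilon:A\subset B^\epsilon\},\inf\{\epsilon:B\subset A^\epsilon\}\}$, $A^\epsilon$ the open $\epsilon$-neighbourhood. *)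

From HB Require Import structures.
From mathcomp Require Import all_boot all_order all_algebra.
From mathcomp Require Import all_classical all_reals all_analysis.
Set Implicit Arguments. Unset Strict Implicit. Unset Printing Implicit Defensive.
Import Order.TTheory GRing.Theory Num.Theory.
Import numFieldNormedType.Exports.
Local Open Scope classical_set_scope.
Local Open Scope ring_scope.

Section Defs.
Variables (R : realType) (V : normedModType R).

Definition convex_subset (A : set V) : Prop :=
  forall x y (t : R), A x -> A y -> 0 <= t -> t <= 1 ->
    A (t *: x + (1 - t) *: y).

Definition Kset (A : set V) : Prop := A !=set0 /\ compact A.

Definition dual_elt (f : V -> R) : Prop :=
  (forall (a : R) (x y : V), f (a *: x + y) = a * f x + f y) /\ continuous f.

Definition dual_norm (f : V -> R) : \bar R :=
  ereal_sup [set (`|f x|)%:E | x in [set x : V | `|x| <= 1]].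

Definition dual_sphere : set (V -> R) :=
  [set f | dual_elt f /\ dual_norm f = 1%E].

Definition support_fun (A : set V) (theta : V -> R) : R := sup (theta @` A).

Definition eps_nbhd (A : set V) (e : R) : set V :=
  [set x | exists2 a, A a & `|x - a| < e].

Definition hausdorff_dist (A B : set V) : R :=
  Num.max (inf [set e : R | A `<=` eps_nbhd B e])
          (inf [set e : R | B `<=` eps_nbhd A e]).

Definition Kconv (Bs : nat -> set V) (A : set V) : Prop :=
  (fun n => hausdorff_dist (Bs n) A) @ \oo --> (0 : R).

Definition Krel_compact (Bs : nat -> set V) : Prop :=
  forall u : nat -> nat, exists2 s : nat -> nat,
    (forall k, (s k < s k.+1)%N) &
    exists2 C, Kset C & Kconv (fun k => Bs (u (s k))) C.

Definition separable_space : Prop :=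
  exists D : set V, countable D /\ dense D.

End Defs.

From HB Require Import structures.
From mathcomp Require Import all_boot all_order all_algebra.
From mathcomp Require Import all_classical all_reals all_analysis.
From mathcomp Require Import ring lra.
Set Implicit Arguments.
Unset Strict Implicit.
Unset Printing Implicit Defensive.

Import Order.TTheory GRing.Theory Num.Theory.
Import numFieldNormedType.Exports.
Local Open Scope classical_set_scope.
Local Open Scope ring_scope.

(* A nonempty compact convex set is determined by its support function on a
   countable family of norm-one functionals.  Since V is separable, with a dense
   sequence (e j), one can choose such a family [dual_seq] so that every norm-one
   functional is uniformly approximated on any compact set by one of its members
   (fix its values at a finite net of the e j up to rationals).  If some point of
   A lies outside a compact convex C, a norm-one functional separates it from C
   (Hahn-Banach applied to the gauge of a neighbourhood of C), hence so does a
   member of the family; so M_A <= M_C on the family forces A to be included in C.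
   Almost surely M_{B_n} converges to phi simultaneously on the whole family.  For
   such an outcome, every subsequence of (B_n) has a further subsequence with a
   Hausdorff limit, which is convex and whose support function is phi on the
   family; all these limits therefore equal a single set A, obtained from any one
   outcome, and B_n -> A.  Finally M_A = lim M_{B_n} = phi on the whole sphere. *)

Section LinearForm.
Variables (R : pzRingType) (V : lmodType R).

Definition linear_form (f : V -> R) : Prop :=
  forall (a : R) (x y : V), f (a *: x + y) = a * f x + f y.

Variables (f : V -> R) (f_lin : linear_form f).

Lemma linear_form0 : f 0 = 0.
Proof.
by apply: (@addrI _ (f 0)); rewrite addr0 -{1}[f 0]mul1r -f_lin scale1r addr0.
Qed.

Lemma linear_formZ a x : f (a *: x) = a * f x.
Proof. by rewrite -[a *: x]addr0 f_lin linear_form0 addr0. Qed.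

Lemma linear_formD x y : f (x + y) = f x + f y.
Proof. by rewrite -[x in LHS]scale1r f_lin mul1r. Qed.

Lemma linear_formN x : f (- x) = - f x.
Proof. by rewrite -scaleN1r linear_formZ mulN1r. Qed.

Lemma linear_formB x y : f (x - y) = f x - f y.
Proof. by rewrite linear_formD linear_formN. Qed.

End LinearForm.

Section HahnBanach.
Variables (R : realType) (V : lmodType R) (p : V -> R).
Hypothesis pD : forall x y, p (x + y) <= p x + p y.
Hypothesis pZ : forall (t : R) x, 0 < t -> p (t *: x) = t * p x.

(* The graph of a linear map, defined on a subspace of V and dominated by p. *)
Definition dominated_graph (G : set (V * R)) : Prop :=
  [/\ G (0, 0),
      forall a u v, G u -> G v -> G (a *: u.1 + v.1, a * u.2 + v.2),
      forall u v, G u -> G v -> u.1 = v.1 -> u.2 = v.2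
    & forall u, G u -> u.2 <= p u.1].

Definition graph_ext (G : set (V * R)) (z : V) (c : R) : set (V * R) :=
  [set w | exists2 u, G u & exists t, w = (u.1 + t *: z, u.2 + t * c)].

Section DominatedGraph.
Variables (G : set (V * R)) (G_dom : dominated_graph G).

Lemma dominated_graphZ a u : G u -> G (a *: u.1, a * u.2).
Proof.
case: G_dom => G0 Glin _ _ Gu.
by have := Glin a _ _ Gu G0; rewrite /= !addr0.
Qed.

Lemma dominated_graphD u v : G u -> G v -> G (u.1 + v.1, u.2 + v.2).
Proof.
case: G_dom => _ Glin _ _ Gu Gv.
by have := Glin 1 _ _ Gu Gv; rewrite scale1r mul1r.
Qed.

Lemma graph_ext_sub z c : G `<=` graph_ext G z c.
Proof. by case=> s y Gu; exists (s, y) => //; exists 0; rewrite scale0r mul0r !addr0. Qed.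

Lemma graph_ext_point z c : graph_ext G z c (z, c).
Proof.
by case: G_dom => G0 _ _ _; exists (0, 0) => //; exists 1; rewrite scale1r mul1r !add0r.
Qed.

Lemma graph_ext_functional z c : ~ (exists y, G (z, y)) ->
  forall u v, graph_ext G z c u -> graph_ext G z c v -> u.1 = v.1 -> u.2 = v.2.
Proof.
move=> Gz _ _ [[s1 y1] G1 [t1 ->]] [[s2 y2] G2 [t2 ->]] /= e.
case: G_dom => _ _ Gfun _.
have t12 : t1 = t2.
  apply: contrapT => /eqP; rewrite -subr_eq0 => t12; apply: Gz.
  (* [z] is then a multiple of [s2 - s1], which lies in the domain of [G]. *)
  exists ((t1 - t2)^-1 * (y2 - y1)).
  have -> : z = (t1 - t2)^-1 *: (s2 - s1).
    apply: (scalerI t12); rewrite scalerA mulfV // scale1r scalerBl.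
    by apply/eqP; rewrite subr_eq addrAC -e addrC addKr.
  have := dominated_graphD (dominated_graphZ (-1) G1) G2.
  by rewrite /= scaleN1r mulN1r ![- _ + _]addrC => /(dominated_graphZ (t1 - t2)^-1).
move: e; rewrite t12 => /addIr s12.
by have /= -> := Gfun _ _ G1 G2 s12.
Qed.

Lemma graph_ext_closed z c a u v : graph_ext G z c u -> graph_ext G z c v ->
  graph_ext G z c (a *: u.1 + v.1, a * u.2 + v.2).
Proof.
move=> [[s1 y1] G1 [t1 ->]] [[s2 y2] G2 [t2 ->]] /=.
exists (a *: s1 + s2, a * y1 + y2).
  by case: G_dom => _ Glin _ _; exact: (Glin _ _ _ G1 G2).
exists (a * t1 + t2); congr (_, _).
  by rewrite scalerDr scalerDl scalerA addrACA.
by rewrite mulrDr mulrDl mulrA addrACA.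
Qed.

Lemma graph_ext_dominated z c :
  (forall u, G u -> u.2 + c <= p (u.1 + z)) ->
  (forall u, G u -> u.2 - c <= p (u.1 - z)) ->
  forall w, graph_ext G z c w -> w.2 <= p w.1.
Proof.
move=> cle cge _ [[s y] Gu [t ->]] /=.
have [t_lt0|t_gt0|->] := ltgtP t 0; last first.
- by rewrite scale0r mul0r !addr0; case: G_dom => _ _ _ Gp; exact: (Gp _ Gu).
- have := cle _ (dominated_graphZ t^-1 Gu); rewrite /= => h.
  have -> : s + t *: z = t *: (t^-1 *: s + z).
    by rewrite scalerDr scalerA mulfV ?gt_eqF // scale1r.
  rewrite pZ //.
  apply: le_trans (ler_wpM2l (ltW t_gt0) h).
  by rewrite mulrDr mulrA mulfV ?gt_eqF // mul1r mulrC.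
- have nt_gt0 : 0 < - t by rewrite oppr_gt0.
  have := cge _ (dominated_graphZ (- t)^-1 Gu); rewrite /= => h.
  have -> : s + t *: z = (- t) *: ((- t)^-1 *: s - z).
    by rewrite scalerBr scalerA mulfV ?gt_eqF // scale1r scaleNr opprK.
  rewrite pZ //; apply: le_trans (ler_wpM2l (ltW nt_gt0) h).
  by rewrite mulrBr mulrA mulfV ?gt_eqF // mul1r mulNr opprK mulrC.
Qed.

Lemma graph_ext_exists z : ~ (exists y, G (z, y)) ->
  exists c, dominated_graph (graph_ext G z c).
Proof.
move=> Gz; have [G0 _ _ Gp] := G_dom.
(* Any [c] between the two bounds below works, by subadditivity of [p]. *)
have sep u v : G u -> G v -> u.2 - p (u.1 - z) <= p (v.1 + z) - v.2.
  move=> Gu Gv; have := Gp _ (dominated_graphD Gu Gv).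
  have := pD (u.1 - z) (v.1 + z); rewrite addrACA addNr addr0 /=; lra.
pose E := [set u.2 - p (u.1 - z) | u in G].
have E0 : E !=set0 by exists (0 - p (0 - z)), (0, 0).
have Eub : has_ubound E by exists (p (0 + z) - 0) => _ [u Gu <-]; exact: (sep u (0, 0)).
exists (sup E); split.
- exact: graph_ext_sub.
- exact: graph_ext_closed.
- exact: graph_ext_functional.
- apply: graph_ext_dominated => u Gu.
    suff : sup E <= p (u.1 + z) - u.2 by lra.
    by apply: ge_sup => // _ [v Gv <-]; exact: sep.
  suff : u.2 - p (u.1 - z) <= sup E by lra.
  by apply: ub_le_sup => //; exists u.
Qed.

End DominatedGraph.

Lemma dominated_graph_bigcup (F : set (set (V * R))) : F !=set0 ->
  total_on F subset -> (forall G, F G -> dominated_graph G) ->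
  dominated_graph (\bigcup_(G in F) G).
Proof.
move=> [G0 FG0] Ftot Fdom.
have both u v : (\bigcup_(G in F) G) u -> (\bigcup_(G in F) G) v ->
    exists2 G, F G & G u /\ G v.
  move=> [G1 F1 G1u] [G2 F2 G2v].
  by have [G12|G21] := Ftot _ _ F1 F2; [exists G2 | exists G1] => //; split => //; auto.
split.
- by exists G0 => //; have [] := Fdom _ FG0.
- move=> a u v Uu Uv; have [G FG [Gu Gv]] := both _ _ Uu Uv.
  by exists G => //; have [_ Glin _ _] := Fdom _ FG; exact: Glin.
- move=> u v Uu Uv; have [G FG [Gu Gv]] := both _ _ Uu Uv.
  by have [_ _ Gfun _] := Fdom _ FG; exact: Gfun.
- by move=> u [G FG Gu]; have [_ _ _ Gp] := Fdom _ FG; exact: Gp.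
Qed.

Lemma dominated_graph_maximal G0 : dominated_graph G0 ->
  exists M, [/\ dominated_graph M, G0 `<=` M & forall x, exists y, M (x, y)].
Proof.
move=> G0_dom.
pose T := {G : set (V * R) | dominated_graph G /\ G0 `<=` G}.
pose le (G H : T) := `[< sval G `<=` sval H >].
pose bot : T := exist _ G0 (conj G0_dom (@subset_refl _ G0)).
have [[M [M_dom G0M]] Mmax] : exists M, premaximal le M.
  apply: (ZL_preorder bot).
  - by move=> G; apply/asboolP.
  - by move=> G H K /asboolP GH /asboolP HK; apply/asboolP; exact: subset_trans HK.
  move=> A Atot; have [[H AH]|A0] := pselect (A !=set0); last first.
    by exists bot => G AG; case: A0; exists G.
  pose F := [set sval G | G in A].
  have F_dom : dominated_graph (\bigcup_(G in F) G).
    apply: dominated_graph_bigcup; first by exists (sval H), H.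
      move=> _ _ [G AG <-] [K AK <-].
      by have [/asboolP|/asboolP] := Atot _ _ AG AK; [left|right].
    by move=> _ [G AG <-]; case: (svalP G).
  have G0F : G0 `<=` \bigcup_(G in F) G.
    by move=> u G0u; exists (sval H); [exists H | case: (svalP H) => _; apply].
  exists (exist _ (\bigcup_(G in F) G) (conj F_dom G0F)) => G AG; apply/asboolP => u Gu.
  by exists (sval G) => //; exists G.
exists M; split => // x; apply: contrapT => Mx.
have [c Mc_dom] := graph_ext_exists M_dom Mx.
have G0Mc := subset_trans G0M (@graph_ext_sub M x c).
have /Mmax /asboolP MxM : le (exist _ M (conj M_dom G0M)) (exist _ _ (conj Mc_dom G0Mc)).
  exact/asboolP/graph_ext_sub.
by apply: Mx; exists c; apply: MxM; exact: graph_ext_point.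
Qed.

Theorem hahn_banach G0 : dominated_graph G0 ->
  exists f, [/\ linear_form f, forall x, f x <= p x & forall u, G0 u -> f u.1 = u.2].
Proof.
move=> /dominated_graph_maximal[M [[_ Mlin Mfun Mp] G0M Mtot]].
have [f Mf] := choice Mtot.
exists f; split.
- move=> a x y; apply: (Mfun (_, _) (_, _) (Mf _)) => //.
  exact: (Mlin _ (_, _) (_, _) (Mf x) (Mf y)).
- by move=> x; exact: (Mp (_, _) (Mf x)).
- by move=> u G0u; exact: (Mfun (_, _) _ (Mf u.1) (G0M _ G0u)).
Qed.

Lemma dominated_graph_line z : (forall x, 0 <= p x) -> 1 <= p z ->
  dominated_graph [set (t *: z, t) | t in [set: R]].
Proof.
move=> p_ge0 pz.
have z0 : z != 0.
  apply: contraTneq pz => ->; have := pZ 0 (ltr0Sn _ 1); rewrite scaler0; lra.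
split.
- by exists 0; rewrite ?scale0r.
- move=> a _ _ [t1 _ <-] [t2 _ <-]; exists (a * t1 + t2) => //=.
  by rewrite scalerDl scalerA.
- move=> _ _ [t1 _ <-] [t2 _ <-] /= /eqP.
  by rewrite -subr_eq0 -scalerBl scaler_eq0 (negbTE z0) orbF subr_eq0 => /eqP.
- move=> _ [t _ <-] /=; have [t_le0|t_gt0] := lerP t 0; first exact: le_trans (p_ge0 _).
  by rewrite pZ // ler_peMr // ltW.
Qed.

End HahnBanach.

Section DualSphere.
Variables (R : realType) (V : normedModType R).
Implicit Types (f : V -> R) (x y : V).

Lemma dual_sphere_linear f : dual_sphere f -> linear_form f.
Proof. by case=> -[]. Qed.

Lemma dual_sphere_le_norm f y : dual_sphere f -> `|f y| <= `|y|.
Proof.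
move=> [[f_lin _] f_norm].
have [->|y0] := eqVneq y 0; first by rewrite (linear_form0 f_lin) normr0.
have ny : 0 < `|y| by rewrite normr_gt0.
have : ((`|f (`|y|^-1 *: y)|)%:E <= 1)%E.
  rewrite -f_norm; apply: ereal_sup_ubound; exists (`|y|^-1 *: y) => //=.
  by rewrite normrZ normfV normr_id mulVf // gt_eqF.
by rewrite lee_fin (linear_formZ f_lin) normrM normfV normr_id ler_pdivrMl // mulr1.
Qed.

Lemma dual_sphere_dist f x y : dual_sphere f -> `|f x - f y| <= `|x - y|.
Proof.
by move=> f_sph; rewrite -(linear_formB (dual_sphere_linear f_sph)) dual_sphere_le_norm.
Qed.

Lemma linear_form_continuous f M : linear_form f -> 0 < M ->
  (forall y, `|f y| <= M * `|y|) -> continuous f.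
Proof.
move=> f_lin M_gt0 fM x; apply/cvgrPdist_lt => e e_gt0.
apply/nbhs_ballP; exists (e / M); first exact: divr_gt0.
move=> y; rewrite -ball_normE /= -(linear_formB f_lin) => xy.
by apply: le_lt_trans (fM _) _; rewrite -ltr_pdivlMl // mulrC.
Qed.

Lemma dual_sphere_normalize f M z : linear_form f -> 0 < M ->
  (forall y, `|f y| <= M * `|y|) -> f z != 0 ->
  exists2 s : R, 0 < s & dual_sphere (fun v => f v / s).
Proof.
move=> f_lin M_gt0 fM fz.
pose E := [set `|f v| | v in [set v : V | `|v| <= 1]].
have E0 : E !=set0 by exists `|f 0|, 0 => //=; rewrite normr0.
have Eub : has_ubound E.
  exists M => _ [v v1 <-]; apply: le_trans (fM v) _.
  by rewrite ger_pMr.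
have z0 : 0 < `|z|.
  by rewrite normr_gt0; apply: contraNneq fz => ->; rewrite (linear_form0 f_lin).
have s_gt0 : 0 < sup E.
  apply: lt_le_trans (ub_le_sup Eub _); last first.
    exists (`|z|^-1 *: z) => //=.
    by rewrite normrZ normfV normr_id mulVf // gt_eqF.
  by rewrite (linear_formZ f_lin) normrM normfV normr_id mulr_gt0 ?invr_gt0 // normr_gt0.
have fs_lin : linear_form (fun v => f v / sup E).
  by move=> a x y; rewrite f_lin mulrDl mulrA.
exists (sup E) => //; split; first split => //.
- apply: (linear_form_continuous fs_lin (divr_gt0 M_gt0 s_gt0)) => y.
  by rewrite normrM normfV (gtr0_norm s_gt0) mulrAC ler_pM2r ?invr_gt0.
- rewrite /dual_norm.
  have -> : [set (`|f v / sup E|)%:E | v in [set v : V | `|v| <= 1]] =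
      [set ((sup E)^-1%:E * x)%E | x in [set r%:E | r in E]].
    rewrite !image_comp; apply: eq_imagel => v _ /=.
    by rewrite normrM normfV (gtr0_norm s_gt0) mulrC.
  by rewrite ereal_sup_pZl ?invr_gt0 // ereal_sup_EFin // -EFinM mulVf ?gt_eqF.
Qed.

End DualSphere.

Section Separation.
Variables (R : realType) (V : normedModType R).
Implicit Types (x y : V) (C : set V).

Lemma convex_eps_nbhd C (e : R) : convex_subset C -> convex_subset (eps_nbhd C e).
Proof.
move=> C_cvx x y t [a Ca xa] [b Cb yb] t0 t1.
exists (t *: a + (1 - t) *: b); first exact: C_cvx.
rewrite opprD addrACA -!scalerBr; apply: le_lt_trans (ler_normD _ _) _.
rewrite !normrZ (ger0_norm t0) ger0_norm ?subr_ge0 //.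
have eA : 0 < e - `|x - a| by rewrite subr_gt0.
have eB : 0 < e - `|y - b| by rewrite subr_gt0.
have t1' : 0 <= 1 - t by rewrite subr_ge0.
have [->|t_neq0] := eqVneq t 0; first by rewrite mul0r subr0 !mul1r add0r.
have t_gt0 : 0 < t by rewrite lt_neqAle eq_sym t_neq0.
have := mulr_gt0 t_gt0 eA; have := mulr_ge0 t1' (ltW eB); lra.
Qed.

Lemma closed_dist_gt0 C x : closed C -> ~ C x ->
  exists2 d : R, 0 < d & forall c, C c -> d <= `|x - c|.
Proof.
move=> C_closed Cx; apply: contrapT => nd; apply/Cx/C_closed => N /nbhs_ballP[r r_gt0 xrN].
apply: contrapT => CN; apply: nd; exists r => // c Cc; rewrite leNgt; apply/negP => xc.
by apply: CN; exists c; split => //; apply: xrN; rewrite -ball_normE.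
Qed.

Section Gauge.
Variables (K : set V) (d : R).
Hypotheses (d_gt0 : 0 < d) (K_convex : convex_subset K).
Hypothesis K_ball : forall y, `|y| < d -> K y.

Definition gauge y : R := inf [set t : R | 0 < t /\ K (t^-1 *: y)].

Lemma gauge_le y t : 0 < t -> K (t^-1 *: y) -> gauge y <= t.
Proof. by move=> t_gt0 Kt; apply: ge_inf => //; exists 0 => s [/ltW]. Qed.

Lemma gauge_ball y t : 0 < t -> `|y| < d * t -> K (t^-1 *: y).
Proof.
move=> t_gt0 yt; apply: K_ball.
by rewrite normrZ normfV (gtr0_norm t_gt0) mulrC ltr_pdivrMr.
Qed.

Lemma gauge_set_neq0 y : [set t : R | 0 < t /\ K (t^-1 *: y)] !=set0.
Proof.
have t_gt0 : 0 < `|y| / d + 1 by rewrite ltr_wpDl ?divr_ge0 // ltW.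
exists (`|y| / d + 1); split => //; apply: gauge_ball => //.
by rewrite mulrDr mulr1 mulrCA mulfV ?gt_eqF // mulr1 ltrDl.
Qed.

Lemma gauge_ge0 y : 0 <= gauge y.
Proof. by apply: lb_le_inf (gauge_set_neq0 y) _ => t [/ltW]. Qed.

Lemma gauge_le_norm y : gauge y <= `|y| / d.
Proof.
apply/ler_addgt0Pr => e e_gt0.
have t_gt0 : 0 < `|y| / d + e by rewrite ltr_wpDl ?divr_ge0 // ltW.
apply: gauge_le => //; apply: gauge_ball => //.
by rewrite mulrDr mulrCA mulfV ?gt_eqF // mulr1 ltrDl mulr_gt0.
Qed.

Lemma gaugeZ t y : 0 < t -> gauge (t *: y) = t * gauge y.
Proof.
suff gaugeZ_le s z : 0 < s -> gauge (s *: z) <= s * gauge z.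
  move=> t_gt0; apply/le_anti; rewrite gaugeZ_le //=.
  have := gaugeZ_le t^-1 (t *: y); rewrite invr_gt0 scalerK ?lt0r_neq0 // => /(_ t_gt0).
  by rewrite -ler_pdivlMl // mulrC.
move=> s_gt0; rewrite -ler_pdivrMl //; apply: lb_le_inf (gauge_set_neq0 z) _ => r [r_gt0 Kr].
rewrite ler_pdivrMl //; apply: gauge_le; first exact: mulr_gt0.
by rewrite scalerA invfM mulrAC mulVf ?gt_eqF // mul1r.
Qed.

Lemma gaugeD y z : gauge (y + z) <= gauge y + gauge z.
Proof.
(* Rescaling [y / s] and [z / t] in [K] by [s / (s + t)] and [t / (s + t)] gives
   [(y + z) / (s + t)] in [K]. *)
have sum_le s t : 0 < s -> K (s^-1 *: y) -> 0 < t -> K (t^-1 *: z) ->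
    gauge (y + z) <= s + t.
  move=> s_gt0 Ks t_gt0 Kt; have st_gt0 : 0 < s + t by rewrite addr_gt0.
  apply: gauge_le => //.
  have -> : (s + t)^-1 *: (y + z) =
      (s / (s + t)) *: (s^-1 *: y) + (1 - s / (s + t)) *: (t^-1 *: z).
    have -> : 1 - s / (s + t) = t / (s + t) by field; rewrite gt_eqF.
    rewrite scalerDr !scalerA; congr (_ *: _ + _ *: _).
      by rewrite mulrAC mulfV ?gt_eqF // mul1r.
    by rewrite mulrAC mulfV ?gt_eqF // mul1r.
  apply: K_convex => //; first by rewrite divr_ge0 // ltW.
  by rewrite ler_pdivrMr // mul1r lerDl ltW.
have : gauge (y + z) - gauge y <= gauge z.
  apply: lb_le_inf (gauge_set_neq0 z) _ => t [t_gt0 Kt].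
  suff : gauge (y + z) - t <= gauge y by lra.
  apply: lb_le_inf (gauge_set_neq0 y) _ => s [s_gt0 Ks].
  by rewrite lerBlDr sum_le.
lra.
Qed.

Lemma gauge_ge1 y : ~ K y -> 1 <= gauge y.
Proof.
move=> Ky; apply: lb_le_inf (gauge_set_neq0 y) _ => t [t_gt0 Kt].
rewrite leNgt; apply/negP => t_lt1; apply: Ky.
have -> : y = t *: (t^-1 *: y) + (1 - t) *: 0.
  by rewrite scaler0 addr0 scalerA mulfV ?gt_eqF // scale1r.
by apply: K_convex => //; [apply: K_ball; rewrite normr0 | exact: ltW | exact: ltW].
Qed.

End Gauge.

Lemma separation_linear C x : C !=set0 -> closed C -> convex_subset C -> ~ C x ->
  exists f, [/\ linear_form f,
    exists2 M : R, 0 < M & forall y, `|f y| <= M * `|y| &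
    exists2 eta : R, 0 < eta & forall c, C c -> f c + eta <= f x].
Proof.
move=> [c0 Cc0] C_closed C_cvx Cx.
have [d d_gt0 dC] := closed_dist_gt0 C_closed Cx.
pose K y := eps_nbhd C d (y + c0).
have K_cvx : convex_subset K.
  move=> y1 y2 t K1 K2 t0 t1; rewrite /K.
  have -> : t *: y1 + (1 - t) *: y2 + c0 = t *: (y1 + c0) + (1 - t) *: (y2 + c0).
    by rewrite !scalerDr addrACA -scalerDl subrKC scale1r.
  exact: convex_eps_nbhd.
have K_ball y : `|y| < d -> K y by move=> yd; exists c0; rewrite // addrK.
pose z := x - c0.
have Kz : ~ K z by move=> [c Cc]; rewrite /z subrK ltNge dC.
have gZ := gaugeZ d_gt0 K_ball.
have gz := gauge_ge1 d_gt0 K_cvx K_ball Kz.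
have [f [f_lin f_le f_line]] := hahn_banach (gaugeD d_gt0 K_cvx K_ball) gZ
  (dominated_graph_line gZ (gauge_ge0 d_gt0 K_ball) gz).
have fz : f z = 1 by apply: (f_line (z, 1)); exists 1; rewrite ?scale1r.
exists f; split => //.
  exists d^-1; first by rewrite invr_gt0.
  move=> y; have := f_le y; have := f_le (- y); rewrite (linear_formN f_lin).
  have := gauge_le_norm d_gt0 K_ball y; have := gauge_le_norm d_gt0 K_ball (- y).
  by rewrite normrN ler_norml mulrC; lra.
have z_gt0 : 0 < `|z|.
  by rewrite normr_gt0; apply: contra_notN Kz => /eqP ->; apply: K_ball; rewrite normr0.
pose lam := d / (2 * `|z|).
exists lam => [|c Cc]; first by rewrite divr_gt0 ?mulr_gt0.
have K_c : K (c - c0 + lam *: z).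
  exists c => //; rewrite [c - c0 + _ + c0]addrAC subrK [c + _]addrC addrK.
  have -> : `|lam *: z| = d / 2.
    by rewrite normrZ gtr0_norm ?divr_gt0 ?mulr_gt0 // /lam; field; rewrite gt_eqF.
  lra.
have gK : gauge K (c - c0 + lam *: z) <= 1 by apply: gauge_le ltr01 _; rewrite invr1 scale1r.
have := le_trans (f_le _) gK.
rewrite (linear_formD f_lin) (linear_formZ f_lin) fz mulr1 (linear_formB f_lin).
by move: fz; rewrite (linear_formB f_lin); lra.
Qed.

Lemma separation C x : C !=set0 -> closed C -> convex_subset C -> ~ C x ->
  exists2 f, dual_sphere f &
    exists2 eta : R, 0 < eta & forall c, C c -> f c + eta <= f x.
Proof.
move=> [c0 Cc0] C_closed C_cvx Cx.
have [f [f_lin [M M_gt0 fM] [eta eta_gt0 f_sep]]] :=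
  separation_linear (ex_intro _ c0 Cc0) C_closed C_cvx Cx.
have c0x : f c0 < f x by apply: lt_le_trans (f_sep _ Cc0); rewrite ltrDl.
have fxc0 : f (x - c0) != 0 by rewrite (linear_formB f_lin) subr_eq0 gt_eqF.
have [s s_gt0 fs] := dual_sphere_normalize f_lin M_gt0 fM fxc0.
exists (fun v => f v / s) => //; exists (eta / s); first exact: divr_gt0.
by move=> c Cc; rewrite -mulrDl ler_pM2r ?invr_gt0 ?f_sep.
Qed.

End Separation.

Section SupportFunction.
Variables (R : realType) (V : normedModType R).
Implicit Types (A B C : set V) (f : V -> R).

Lemma compact_norm_le A : compact A -> exists M, forall a, A a -> `|a| <= M.
Proof.
move=> /compact_bounded[M [_ AM]]; exists (M + 1) => a Aa.
by apply: (AM (M + 1)) => //; rewrite ltrDl.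
Qed.

Lemma support_fun_ge A f a : compact A -> dual_sphere f -> A a -> f a <= support_fun A f.
Proof.
move=> /compact_norm_le[M AM] f_sph Aa; apply: ub_le_sup; last by exists a.
exists M => _ [b Ab <-]; apply: le_trans (AM b Ab).
exact: le_trans (ler_norm _) (dual_sphere_le_norm _ f_sph).
Qed.

Lemma support_fun_le A f r : A !=set0 -> (forall a, A a -> f a <= r) ->
  support_fun A f <= r.
Proof.
move=> [a0 Aa0] Ar; apply: ge_sup; first by exists (f a0), a0.
by move=> _ [a Aa <-]; exact: Ar.
Qed.

Lemma support_fun_eps_nbhd A B f e : A !=set0 -> compact B -> dual_sphere f ->
  A `<=` eps_nbhd B e -> support_fun A f <= support_fun B f + e.
Proof.
move=> A0 B_cpt f_sph AB; apply: support_fun_le => // a Aa.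
have [b Bb ab] := AB a Aa.
rewrite -[f a](subrK (f b)) addrC.
apply: lerD; first exact: support_fun_ge.
exact: le_trans (ler_norm _) (le_trans (dual_sphere_dist _ _ f_sph) (ltW ab)).
Qed.

Lemma eps_nbhd_radii_neq0 A B : Kset A -> Kset B -> [set e : R | A `<=` eps_nbhd B e] !=set0.
Proof.
move=> [_ A_cpt] [[b Bb] _]; have [M AM] := compact_norm_le A_cpt.
exists (M + `|b| + 1) => a Aa; exists b => //.
by apply: le_lt_trans (ler_normB _ _) _; have := AM a Aa; lra.
Qed.

Lemma inf_eps_nbhd_lt A B e : Kset A -> Kset B ->
  inf [set e : R | A `<=` eps_nbhd B e] < e -> A `<=` eps_nbhd B e.
Proof.
move=> KA KB /(inf_lt (eps_nbhd_radii_neq0 KA KB))[e' AB e'e] a Aa.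
by have [b Bb ab] := AB a Aa; exists b => //; exact: lt_trans e'e.
Qed.

Lemma hausdorff_dist_lt A B e : Kset A -> Kset B -> hausdorff_dist A B < e ->
  A `<=` eps_nbhd B e /\ B `<=` eps_nbhd A e.
Proof.
move=> KA KB; rewrite /hausdorff_dist gt_max => /andP[AB BA].
by split; exact: inf_eps_nbhd_lt.
Qed.

Lemma Kconv_near (Bs : nat -> set V) C e : Kconv Bs C -> 0 < e ->
  \forall n \near \oo, hausdorff_dist (Bs n) C < e.
Proof.
move=> /cvgrPdist_lt BC e_gt0; apply: filterS (BC e e_gt0) => n.
by rewrite sub0r normrN; exact: le_lt_trans (ler_norm _).
Qed.

Lemma Kconv_support_fun (Bs : nat -> set V) C f : (forall n, Kset (Bs n)) -> Kset C ->
  dual_sphere f -> Kconv Bs C ->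
  (fun n => support_fun (Bs n) f) @ \oo --> support_fun C f.
Proof.
move=> KB KC f_sph BC; apply/cvgrPdist_lt => e e_gt0.
apply: filterS (Kconv_near BC (divr_gt0 e_gt0 (ltr0Sn _ 1))) => n BnC.
have [BnC1 BnC2] := hausdorff_dist_lt (KB n) KC BnC.
have := support_fun_eps_nbhd (proj1 (KB n)) (proj2 KC) f_sph BnC1.
have := support_fun_eps_nbhd (proj1 KC) (proj2 (KB n)) f_sph BnC2.
by rewrite ltr_norml; lra.
Qed.

Lemma Kconv_convex (Bs : nat -> set V) C :
  (forall n, Kset (Bs n) /\ convex_subset (Bs n)) -> Kset C -> Kconv Bs C ->
  convex_subset C.
Proof.
move=> KB KC BC x y t Cx Cy t0 t1.
apply: (compact_closed (@norm_hausdorff _ V) (proj2 KC)) => N /nbhs_ballP[r r_gt0 rN].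
have r2_gt0 : 0 < r / 2 by rewrite divr_gt0.
have [n BnC] := filter_ex (Kconv_near BC r2_gt0).
have [KBn Bn_cvx] := KB n; have [BnC1 BnC2] := hausdorff_dist_lt KBn KC BnC.
have [b Bnb xyb] := convex_eps_nbhd Bn_cvx (BnC2 x Cx) (BnC2 y Cy) t0 t1.
have [c Cc bc] := BnC1 b Bnb.
exists c; split => //; apply: rN; rewrite -ball_normE /=.
have -> : t *: x + (1 - t) *: y - c = (t *: x + (1 - t) *: y - b) + (b - c).
  by rewrite addrA subrK.
by apply: le_lt_trans (ler_normD _ _) _; rewrite [r]splitr ltrD.
Qed.

End SupportFunction.

Lemma increasing_ge (s : nat -> nat) : (forall k, s k < s k.+1)%N ->
  forall k, (k <= s k)%N.
Proof. by move=> s_incr; elim=> // k ih; exact: leq_ltn_trans ih (s_incr k). Qed.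

Lemma cvg_comp_ge (T : topologicalType) (v : nat -> T) (l : T) (u : nat -> nat) :
  (forall k, (k <= u k)%N) -> v @ \oo --> l -> (fun k => v (u k)) @ \oo --> l.
Proof.
move=> u_ge; apply: cvg_comp; apply/cvgnyPge => N.
by exists N => // k /= Nk; exact: leq_trans Nk (u_ge k).
Qed.

Lemma cvg_subseq_criterion (R : realType) (v : nat -> R) (l : R) :
  (forall u : nat -> nat, (forall k, (k <= u k)%N) ->
    exists s : nat -> nat, (fun k => v (u (s k))) @ \oo --> l) ->
  v @ \oo --> l.
Proof.
move=> sub; apply: contrapT => nv.
have [e e_gt0 far] : exists2 e : R, 0 < e &
    forall N, exists n, (N <= n)%N /\ e <= `|l - v n|.
  apply: contrapT => nfar; apply/nv/cvgrPdist_lt => e e_gt0.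
  apply: contrapT => nnear; apply: nfar; exists e => // N.
  apply: contrapT => nN; apply: nnear; exists N => // n /= Nn.
  by rewrite ltNge; apply/negP => en; apply: nN; exists n.
have [u uP] := choice far.
have [s /cvgrPdist_lt /(_ e e_gt0) /filter_ex[k]] := sub u (fun N => (uP N).1).
by rewrite ltNge (uP (s k)).2.
Qed.

Section DualSequence.
Variables (R : realType) (V : normedModType R) (e : nat -> V).
Hypothesis e_dense : forall (x : V) (r : R), 0 < r -> exists n, `|x - e n| < r.

(* An index [(l, m)] encodes the constraints [|f (e j) - q| < 1 / (m + 1)] for
   [(j, q)] in [l]; [dual_seq] picks one sphere element per satisfiable index and
   is the junk value [0], which is not in the sphere, elsewhere. *)
Definition dual_candidate (i : seq (nat * rat) * nat) : set (V -> R) :=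
  [set f | dual_sphere f /\
     forall jq, jq \in i.1 -> `|f (e jq.1) - ratr jq.2| < (i.2.+1%:R)^-1].

Definition dual_seq (n : nat) : V -> R :=
  if @choice.unpickle (seq (nat * rat) * nat)%type n is Some i then
    if pselect (exists f, dual_candidate i f) is left h then projT1 (cid h)
    else fun=> 0
  else fun=> 0.

Lemma dual_seq_pickle i f : dual_candidate i f ->
  dual_candidate i (dual_seq (choice.pickle i)).
Proof.
move=> fi; rewrite /dual_seq choice.pickleK; case: pselect => [h|[]]; last by exists f.
exact: projT2 (cid h).
Qed.

Lemma dual_seq_approx f (K : set V) (eps : R) : dual_sphere f -> compact K -> 0 < eps ->
  exists n, dual_sphere (dual_seq n) /\ forall k, K k -> `|f k - dual_seq n k| < eps.
Proof.
move=> f_sph K_cpt eps_gt0.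
have eps4_gt0 : 0 < eps / 4 by rewrite divr_gt0.
have K_balls : K `<=` cover [set: nat] (fun j => ball (e j) (eps / 4)).
  move=> k _; have [j kj] := e_dense k eps4_gt0; exists j => //.
  by rewrite -ball_normE /= distrC.
have K_cover : cover_compact K by rewrite -compact_cover.
have [D _ KD] := K_cover _ _ _ (fun j _ => ball_open (e j) (eps / 4)) K_balls.
have [m m_eps] : exists m : nat, 0 + (m.+1%:R)^-1 < eps / 8.
  by apply: ltr_add_invr; rewrite divr_gt0.
rewrite add0r in m_eps.
have q_of j : exists q : rat, `|f (e j) - ratr q| < (m.+1%:R)^-1.
  have : ball (f (e j)) (m.+1%:R)^-1 !=set0 by exists (f (e j)); exact: ballxx.
  move=> /dense_rat/(_ (ball_open _ _))[x [/= fx [q _ qx]]].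
  by exists q; rewrite qx; rewrite -ball_normE in fx.
have [q qP] := choice q_of.
pose i := ([seq (j, q j) | j <- finmap.enum_fset D], m).
have [g_sph gq] : dual_candidate i (dual_seq (choice.pickle i)).
  by apply: (@dual_seq_pickle _ f); split => // _ /mapP[j _ ->]; exact: qP.
exists (choice.pickle i); split => // k Kk.
set g := dual_seq _ in g_sph gq *.
have [j Dj] := KD k Kk; rewrite -ball_normE /= => kj.
have jk : `|k - e j| < eps / 4 by rewrite distrC.
have fkj := le_lt_trans (dual_sphere_dist k (e j) f_sph) jk.
have gjk := le_lt_trans (dual_sphere_dist (e j) k g_sph) kj.
move: fkj gjk (qP j) (gq (j, q j) (map_f _ Dj)) m_eps; rewrite !ltr_norml /=.
move: (m.+1%:R^-1 : R) => w.
by move=> /andP[? ?] /andP[? ?] /andP[? ?] /andP[? ?] w_eps; apply/andP; split; lra.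
Qed.

Lemma subset_of_dual_seq_support (A C : set V) : compact A -> Kset C -> convex_subset C ->
  (forall n, dual_sphere (dual_seq n) ->
    support_fun A (dual_seq n) <= support_fun C (dual_seq n)) ->
  A `<=` C.
Proof.
move=> A_cpt [C0 C_cpt] C_cvx AC x Ax; apply: contrapT => Cx.
have C_closed : closed C := compact_closed (@norm_hausdorff _ V) C_cpt.
have [f f_sph [eta eta_gt0 f_sep]] := separation C0 C_closed C_cvx Cx.
have eta3_gt0 : 0 < eta / 3 by rewrite divr_gt0.
have [n [n_sph n_f]] := dual_seq_approx f_sph (compactU A_cpt C_cpt) eta3_gt0.
have : support_fun C (dual_seq n) <= dual_seq n x - eta / 3.
  apply: support_fun_le => // c Cc.
  have := f_sep c Cc; have := n_f c (or_intror Cc); have := n_f x (or_introl Ax).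
  by rewrite !ltr_norml; lra.
have := le_trans (support_fun_ge A_cpt n_sph Ax) (AC n n_sph); lra.
Qed.

End DualSequence.

Section Limits.
Variables (R : realType) (V : normedModType R).

Lemma support_fun_subseq_limit (Bs : nat -> set V) (w : nat -> nat) C f l :
  (forall k, (k <= w k)%N) -> (forall n, Kset (Bs n)) -> Kset C -> dual_sphere f ->
  Kconv (fun k => Bs (w k)) C -> (fun n => support_fun (Bs n) f) @ \oo --> l ->
  support_fun C f = l.
Proof.
move=> w_ge KB KC f_sph BwC Bl.
move/(cvg_comp_ge w_ge): Bl => /= Bwl.
exact: (cvg_unique (@Rhausdorff R) (Kconv_support_fun (fun k => KB (w k)) KC f_sph BwC) Bwl).
Qed.

Lemma Kconv_of_dual_seq_support (e : nat -> V) (Bs : nat -> set V) A :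
  (forall (x : V) (r : R), 0 < r -> exists n, `|x - e n| < r) ->
  Krel_compact Bs -> (forall n, Kset (Bs n) /\ convex_subset (Bs n)) ->
  Kset A -> convex_subset A ->
  (forall n, dual_sphere (dual_seq e n) ->
    (fun k => support_fun (Bs k) (dual_seq e n)) @ \oo --> support_fun A (dual_seq e n)) ->
  Kconv Bs A.
Proof.
move=> e_dense Bs_rel KB KA A_cvx BsA; apply: cvg_subseq_criterion => u u_ge.
have [s s_incr [C KC BC]] := Bs_rel u.
have us_ge k : (k <= u (s k))%N := leq_trans (increasing_ge s_incr k) (u_ge _).
have CA n : dual_sphere (dual_seq e n) ->
    support_fun C (dual_seq e n) = support_fun A (dual_seq e n).
  move=> n_sph; apply: support_fun_subseq_limit us_ge _ KC n_sph BC (BsA n n_sph).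
  by move=> k; case: (KB k).
have C_cvx := Kconv_convex (fun k => KB (u (s k))) KC BC.
suff -> : A = C by exists s.
have [_ A_cpt] := KA; have [_ C_cpt] := KC.
by apply/seteqP; split; apply: (subset_of_dual_seq_support e_dense) => // n n_sph; rewrite CA.
Qed.

End Limits.

Lemma separable_dense_seq (R : realType) (V : normedModType R) : @separable_space R V ->
  exists e : nat -> V, forall (x : V) (r : R), 0 < r -> exists n, `|x - e n| < r.
Proof.
move=> [D [D_cnt D_dense]].
have D_near x r : 0 < r -> exists2 y, D y & `|x - y| < r.
  move=> r_gt0; have [|y [xy Dy]] := D_dense (ball x r) _ (ball_open x r).
    by exists x; exact: ballxx.
  by exists y => //; rewrite -ball_normE in xy.
case/pfcard_geP: D_cnt => [D0|/surjfunPex[e De]].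
  by have [y] := D_near 0 1 ltr01; rewrite D0.
exists e => x r r_gt0; have [y Dy xy] := D_near x r r_gt0.
have [n _ ny] : (e @` setT) y by rewrite -De.
by exists n; rewrite ny.
Qed.

Lemma probability_ae_ex d (T : measurableType d) (R : realType) (P : probability T R)
    (Q1 Q2 : T -> Prop) :
  {ae P, forall w, Q1 w} -> {ae P, forall w, Q2 w} -> exists w, Q1 w /\ Q2 w.
Proof.
have P_gt0 : (0 < P [set: T])%E by rewrite probability_setT lte01.
have P_proper : ProperFilter (almost_everywhere P).
  exact: ae_properfilter_algebraOfSetsType.
move=> Q1P Q2P; apply: (@filter_ex _ _ P_proper).
by apply: filterS2 Q1P Q2P => w Q1w Q2w.
Qed.

Theorem lemma13 (R : realType) (V : completeNormedModType R)
  (d : measure_display) (Omega : measurableType d) (P : probability Omega R)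
  (B : nat -> Omega -> set V) (phi : (V -> R) -> R) :
  @separable_space R V ->
  (forall n w, Kset (B n w) /\ convex_subset (B n w)) ->
  {ae P, forall w, Krel_compact (fun n => B n w)} ->
  (forall theta, @dual_sphere R V theta ->
     {ae P, forall w, (fun n => support_fun (B n w) theta) @ \oo --> phi theta}) ->
  exists2 A : set V, Kset A /\
      (forall theta, @dual_sphere R V theta -> support_fun A theta = phi theta) &
    {ae P, forall w, Kconv (fun n => B n w) A}.
Proof.
move=> V_sep B_K B_rel B_supp.
have [e e_dense] := separable_dense_seq V_sep.
pose Th := dual_seq e.
have B_Th : {ae P, forall w n, dual_sphere (Th n) ->
    (fun k => support_fun (B k w) (Th n)) @ \oo --> phi (Th n)}.
  apply: ae_foralln => n; have [n_sph|n_sph] := pselect (dual_sphere (Th n)).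
    by apply: filterS (B_supp _ n_sph) => w.
  by apply: nearW => w /n_sph.
have [w0 [w0_rel w0_Th]] := probability_ae_ex B_rel B_Th.
have [s s_incr [A KA BA]] := w0_rel id.
have A_cvx := Kconv_convex (fun k => B_K (s k) w0) KA BA.
have A_Th n : dual_sphere (Th n) -> support_fun A (Th n) = phi (Th n).
  move=> n_sph; apply: (support_fun_subseq_limit (Bs := B^~ w0) (increasing_ge s_incr) _
    KA n_sph BA (w0_Th n n_sph)).
  by move=> k; case: (B_K k w0).
have B_A : {ae P, forall w, Kconv (fun n => B n w) A}.
  apply: filterS2 B_rel B_Th => w w_rel w_Th.
  apply: (Kconv_of_dual_seq_support e_dense) => // n n_sph.
  by rewrite A_Th //; exact: w_Th.
exists A => //; split => // th th_sph.
have [w [BwA Bw_th]] := probability_ae_ex B_A (B_supp th th_sph).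
have BwA_th := Kconv_support_fun (fun k => (B_K k w).1) KA th_sph BwA.
exact: (cvg_unique (@Rhausdorff R) BwA_th Bw_th).
Qed.
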